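(* Let $G'$ be an inflation of the causal structure $G$. A set $\mathbf{V}\subseteq\mathcal{O}(G')$ of observed nodes of $G'$ is injectable if and only if every two-element subset of $\mathbf{V}$ is injectable. Equivalently, the injectable sets are exactly the cliques of the undirected graph on $\mathcal{O}(G')$ in which two nodes are adjacent iff the pair is injectable.
   Context: A causal structure $G$ is a finite DAG with nodes partitioned into observed $\mathcal{O}(G)$ and latent. $\mathrm{An}_G(\mathbf{X})$ denotes the set of ancestors of $\mathbf{X}$ including $\mathbf{X}$; the ancestral subgraph of $\mathbf{X}$ is the induced subgraph on $\mathrm{An}_G(\mathbf{X})$. Inflation: every node of $G'$ is a copy $X_i$ of a node $X$ of $G$, inheriting observed/latent status; $\mathbf{X}'\sim\mathbf{X}$ means $\mathbf{X}'$ contains exactly one copy of each node of $\mathbf{X}$ and nothing else, and for subgraphs $\sim$ also requires edges to correspond under dropping copy-indices. $G'$ is an inflation of $G$ if $\mathrm{Pa}_{G'}(X_i)\sim\mathrm{Pa}_G(X)$ for every node $X_i$ of $G'$. $\mathbf{V}'\subseteq\mathcal{O}(G')$ is injectable if there is $\mathbf{V}\subseteq\mathcal{O}(G)$ with $\mathbf{V}'\sim\mathbf{V}$ and the ancestral subgraph of $\mathbf{V}'$ in $G'$ $\sim$ the ancestral subgraph of $\mathbf{V}$ in $G$. *)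

From mathcomp Require Import all_boot.
Set Implicit Arguments. Unset Strict Implicit. Unset Printing Implicit Defensive.

(* A causal structure: a finite DAG on node type T, edge relation [e]
   ([e x y] means x -> y, i.e. x is a parent of y), and a predicate [obs]
   of observed nodes (the others are latent). *)
Definition acyclic (T : finType) (e : rel T) : Prop :=
  forall x y : T, e x y -> ~~ connect e y x.

Definition parents (T : finType) (e : rel T) (x : T) : {set T} :=
  [set y | e y x].

Definition ancestors (T : finType) (e : rel T) (X : {set T}) : {set T} :=
  [set a | [exists x in X, connect e a x]].

Definition observed (T : finType) (obs : pred T) : {set T} := [set x | obs x].

(* [p] maps each node of G' to the node of G of which it is a copy.
   X' ~ X : X' contains exactly one copy of each node of X and nothing else. *)
Definition sim_set (T T' : finType) (p : T' -> T) (X' : {set T'}) (X : {set T}) : Prop :=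
  {in X' &, injective p} /\ p @: X' = X.

Definition sim_subgraph (T T' : finType) (e : rel T) (e' : rel T') (p : T' -> T)
    (X' : {set T'}) (X : {set T}) : Prop :=
  sim_set p X' X /\ {in X' &, forall x y, e' x y = e (p x) (p y)}.

Definition inflation (T T' : finType) (e : rel T) (obs : pred T)
    (e' : rel T') (obs' : pred T') (p : T' -> T) : Prop :=
  (forall x : T', obs' x = obs (p x)) /\
  (forall x : T', sim_set p (parents e' x) (parents e (p x))).

Definition injectable (T T' : finType) (e : rel T) (obs : pred T)
    (e' : rel T') (obs' : pred T') (p : T' -> T) (V' : {set T'}) : Prop :=
  V' \subset observed obs' /\
  exists V : {set T}, V \subset observed obs /\ sim_set p V' V /\
    sim_subgraph e e' p (ancestors e' V') (ancestors e V).

(* An inflation copies, for every node, the full parent set of the original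
   node, so every ancestral path of G ending at a copied node lifts to G';
   hence the copy map sends ancestors onto ancestors, and it identifies edges
   of G' with edges of G as soon as it is injective on the ancestors.  A set V'
   is therefore injectable exactly when the copy map is injective on its
   ancestral set.  Since that set is the union of the ancestral sets of the
   nodes of V', injectivity on it is a condition on pairs of nodes of V'. *)

From mathcomp Require Import all_boot.

Set Implicit Arguments.
Unset Strict Implicit.
Unset Printing Implicit Defensive.

Section Ancestors.
Variables (T : finType) (e : rel T).

Lemma ancestorsP (S : {set T}) a :
  reflect (exists2 x, x \in S & connect e a x) (a \in ancestors e S).
Proof. by rewrite inE; apply: exists_inP. Qed.

Lemma ancestors_subset (S : {set T}) : S \subset ancestors e S.
Proof. by apply/subsetP=> x xS; apply/ancestorsP; exists x. Qed.

Lemma ancestorsS (S1 S2 : {set T}) :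
  S1 \subset S2 -> ancestors e S1 \subset ancestors e S2.
Proof.
move/subsetP=> sS12; apply/subsetP=> a /ancestorsP[x xS1 ax].
by apply/ancestorsP; exists x; first exact: sS12.
Qed.

Lemma ancestors_connect (S : {set T}) a b :
  connect e a b -> b \in ancestors e S -> a \in ancestors e S.
Proof.
move=> ab /ancestorsP[x xS bx]; apply/ancestorsP; exists x => //.
exact: connect_trans bx.
Qed.

Lemma injective_ancestors_pairwise (aT : eqType) (f : T -> aT) (S : {set T}) :
  {in ancestors e S &, injective f} <->
  (forall x y, x \in S -> y \in S ->
     {in ancestors e [set x; y] &, injective f}).
Proof.
split=> [injf x y xS yS | injf2 a b].
  have sxyS : [set x; y] \subset S by rewrite subUset !sub1set xS yS.
  by apply: sub_in2 injf; apply/subsetP/ancestorsS.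
move=> /ancestorsP[x xS ax] /ancestorsP[y yS b_y].
apply: (injf2 x y) => //; apply/ancestorsP.
- by exists x; first exact: set21.
- by exists y; first exact: set22.
Qed.

End Ancestors.

Section Inflation.
Variables (T T' : finType) (e : rel T) (obs : pred T)
    (e' : rel T') (obs' : pred T') (p : T' -> T).
Hypothesis infl : inflation e obs e' obs' p.

Lemma inflation_parent a y' :
  e a (p y') -> exists2 x', e' x' y' & p x' = a.
Proof.
have [_ /(_ y')[_ im_parents]] := infl.
move=> ay'; have : a \in parents e (p y') by rewrite inE.
rewrite -im_parents => /imsetP[x' x'y' ->]; exists x' => //.
by rewrite inE in x'y'.
Qed.

Lemma inflation_edge x' y' : e' x' y' -> e (p x') (p y').
Proof.
have [_ /(_ y')[_ im_parents]] := infl.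
move=> x'y'; have : p x' \in p @: parents e' y' by rewrite imset_f ?inE.
by rewrite im_parents inE.
Qed.

Lemma inflation_connect x' y' : connect e' x' y' -> connect e (p x') (p y').
Proof.
move/connectP=> [s]; elim: s x' => [|z' s IHs] x' /=; first by move=> _ ->.
move=> /andP[x'z' z's] y'E.
exact: connect_trans (connect1 (inflation_edge x'z')) (IHs z' z's y'E).
Qed.

Lemma inflation_lift_connect a y' :
  connect e a (p y') -> exists2 x', connect e' x' y' & p x' = a.
Proof.
move/connectP=> [s]; elim: s a => [|b s IHs] a /=.
  by move=> _ <-; exists y'.
move=> /andP[ab bs] y'E.
have [b' b'y' pb'E] := IHs b bs y'E; rewrite -pb'E in ab.
have [x' x'b' <-] := inflation_parent ab.
by exists x'; first exact: connect_trans (connect1 x'b') b'y'.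
Qed.

Lemma inflation_ancestors (S : {set T'}) :
  p @: ancestors e' S = ancestors e (p @: S).
Proof.
apply/setP=> a; apply/imsetP/ancestorsP.
  move=> [x' /ancestorsP[y' y'S x'y'] ->].
  by exists (p y'); [exact: imset_f | exact: inflation_connect].
move=> [_ /imsetP[y' y'S ->] /inflation_lift_connect[x' x'y' <-]].
by exists x' => //; apply/ancestorsP; exists y'.
Qed.

Lemma inflation_edgeE (S : {set T'}) :
  {in ancestors e' S &, injective p} ->
  {in ancestors e' S &, forall x' y', e' x' y' = e (p x') (p y')}.
Proof.
move=> injp x' y' x'S y'S; apply/idP/idP => [|/inflation_parent[z' z'y' pz'E]].
  exact: inflation_edge.
have z'S : z' \in ancestors e' S := ancestors_connect (connect1 z'y') y'S.
by rewrite -(injp _ _ z'S x'S pz'E).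
Qed.

Lemma injectableP (V' : {set T'}) :
  injectable e obs e' obs' p V' <->
  V' \subset observed obs' /\ {in ancestors e' V' &, injective p}.
Proof.
split=> [[obsV' [V [_ [_ [[injp _] _]]]]] // | [obsV' injp]].
split=> //; exists (p @: V'); split; last split.
- apply/subsetP=> _ /imsetP[x' x'V' ->].
  have [obsE _] := infl.
  by move/subsetP/(_ x' x'V'): obsV'; rewrite !inE obsE.
- split=> //; apply: sub_in2 injp; exact/subsetP/ancestors_subset.
- split; last exact: inflation_edgeE.
  by split; last exact: inflation_ancestors.
Qed.

End Inflation.

Theorem mainTheorem4 (T T' : finType) (e : rel T) (obs : pred T)
    (e' : rel T') (obs' : pred T') (p : T' -> T) :
  acyclic e -> acyclic e' -> inflation e obs e' obs' p ->
  forall V' : {set T'}, V' \subset observed obs' ->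
    injectable e obs e' obs' p V' <->
    (forall x y, x \in V' -> y \in V' -> injectable e obs e' obs' p [set x; y]).
Proof.
move=> _ _ infl V' obsV'.
apply: iff_trans (injectableP infl V') _.
split=> [[_ /injective_ancestors_pairwise injp2] x y xV' yV' | injp2].
  apply/(injectableP infl); split; last exact: injp2.
  by apply: subset_trans obsV'; rewrite subUset !sub1set xV' yV'.
split=> //; apply/injective_ancestors_pairwise => x y xV' yV'.
by have /(injectableP infl)[] := injp2 x y xV' yV'.
Qed.
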